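(* Let $L$ be a distributive lattice, $n\ge1$, $a_i,b_i\in L$ with $a_i<b_i$ for $i\in[n]$, $\widehat{\mathbf e}_I\in L^n$ ($I\subseteq[n]$) the tuple with $i$-th component $b_i$ if $i\in I$ and $a_i$ otherwise, $D=\{\widehat{\mathbf e}_I:I\subseteq[n]\}$, and $f\colon D\to L$ satisfying $$f(\widehat{\mathbf e}_{I\cup\{k\}})\wedge a_k\le f(\widehat{\mathbf e}_I)\le f(\widehat{\mathbf e}_{I\setminus\{k\}})\vee b_k\quad\text{for all } I\subseteq[n],\ k\in[n].$$ Then for all $S\subseteq T\subseteq[n]$, $$f(\widehat{\mathbf e}_T)\wedge\bigwedge_{k\in T\setminus S}a_k\le f(\widehat{\mathbf e}_S)\quad\text{and}\quad f(\widehat{\mathbf e}_T)\le f(\widehat{\mathbf e}_S)\vee\bigvee_{k\in T\setminus S}b_k.$$ *)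

From mathcomp Require Import all_boot all_order.
Set Implicit Arguments. Unset Strict Implicit. Unset Printing Implicit Defensive.
Import Order.TTheory.
Local Open Scope order_scope.

Definition ehat (T : Type) (n : nat) (a b : 'I_n -> T) (I : {set 'I_n})
  : {ffun 'I_n -> T} := [ffun i => if i \in I then b i else a i].

From mathcomp Require Import all_boot all_order.
Import Order.TTheory.
Local Open Scope order_scope.

(* Induction on #|T :\: S|: move one index k of T :\: S into S, apply the
   induction hypothesis to (k |: S, T) and close the gap by the one-step
   hypothesis at (S, k). *)

Lemma big_setD1_AC {disp : Order.disp_t} {L : porderType disp} {I : finType}
    (op : SemiGroup.com_law L) (x : L) {A : {set I}} {k : I} (F : I -> L) :
  k \in A -> \big[op/x]_(i in A) F i = op (F k) (\big[op/x]_(i in A :\ k) F i).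
Proof.
move=> kA; rewrite (big_rem_AC op x _ _ (mem_index_enum k)) kA.
rewrite rem_filter ?index_enum_uniq // big_filter_cond.
by apply: congr1; apply: eq_bigl => i; rewrite in_setD1.
Qed.

Lemma setDD1 (I : finType) (S T : {set I}) (k : I) :
  (T :\: S) :\ k = T :\: (k |: S).
Proof. by apply/setP => i; rewrite !inE; case: (i == k); rewrite ?andbF. Qed.

Lemma set_ind_card_setD (I : finType) (P : {set I} -> {set I} -> Prop) :
  (forall S, P S S) ->
  (forall S T k, k \in T :\: S -> P (k |: S) T -> P S T) ->
  forall S T : {set I}, S \subset T -> P S T.
Proof.
move=> P_refl P_step S T; move Em: #|T :\: S| => m.
elim: m S Em => [|m IHm] S Em sST.
  suff -> : T = S by [].
  by apply/eqP; rewrite eqEsubset sST andbT -setD_eq0 -cards_eq0 Em.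
have [k kTS] : exists k, k \in T :\: S by apply/set0Pn; rewrite -card_gt0 Em.
have /andP[kS kT] : (k \notin S) && (k \in T) by rewrite -in_setD.
apply: (P_step _ _ k kTS); apply: IHm; last by rewrite subUset sub1set kT.
by move: (cardsD1 k (T :\: S)); rewrite kTS Em setDD1 add1n => -[].
Qed.

Section OneStepChains.

Variables (disp : Order.disp_t) (L : latticeType disp) (I : finType).
Variables (g : {set I} -> L) (a b : I -> L).

Lemma meet_chain_le :
    (forall (J : {set I}) k, g (k |: J) `&` a k <= g J) ->
  forall S T : {set I}, S \subset T -> \big[Order.meet/g T]_(k in T :\: S) a k <= g S.
Proof.
move=> g_step; apply: set_ind_card_setD => [S|S T k kTS IH].
  by rewrite setDv big_set0.
rewrite (big_setD1_AC _ _ _ kTS) setDD1.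
by apply: le_trans (g_step S k); rewrite meetC leI2.
Qed.

Lemma join_seedC (x y : L) (A : {set I}) :
  \big[Order.join/(x `|` y)]_(i in A) b i = y `|` \big[Order.join/x]_(i in A) b i.
Proof.
by elim/big_rec2: _ => [|i u v _ ->]; [rewrite joinC | rewrite joinCA].
Qed.

Lemma join_chain_le :
    (forall (J : {set I}) k, k \in J -> g J <= g (J :\ k) `|` b k) ->
  forall S T : {set I}, S \subset T -> g T <= \big[Order.join/g S]_(k in T :\: S) b k.
Proof.
move=> g_step; apply: set_ind_card_setD => [S|S T k kTS IH].
  by rewrite setDv big_set0.
have /andP[kS _] : (k \notin S) && (k \in T) by rewrite -in_setD.
have g_kS : g (k |: S) <= g S `|` b k.
  by rewrite -{2}(setU1K kS) g_step // setU11.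
rewrite (big_setD1_AC _ _ _ kTS) /= setDD1 -join_seedC.
apply: le_trans IH _; elim/big_rec2: _ => [|i u v _ uv]; first exact: g_kS.
exact: leU2.
Qed.

End OneStepChains.

Theorem lemma3p1 (disp : Order.disp_t) (L : distrLatticeType disp) (n : nat)
  (hn : (1 <= n)%N) (a b : 'I_n -> L) (hab : forall i, a i < b i)
  (f : {ffun 'I_n -> L} -> L)
  (hf : forall (I : {set 'I_n}) (k : 'I_n),
      f (ehat a b (k |: I)) `&` a k <= f (ehat a b I) /\
      f (ehat a b I) <= f (ehat a b (I :\ k)) `|` b k) :
  forall S T : {set 'I_n}, S \subset T ->
    \big[Order.meet/f (ehat a b T)]_(k in T :\: S) a k <= f (ehat a b S) /\
    f (ehat a b T) <= \big[Order.join/f (ehat a b S)]_(k in T :\: S) b k.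
Proof.
move=> S T sST; split.
- by apply: (@meet_chain_le _ _ _ (fun J => f (ehat a b J))) => // J k; case: (hf J k).
- by apply: (@join_chain_le _ _ _ (fun J => f (ehat a b J))) => // J k _; case: (hf J k).
Qed.
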